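(* For every non-negative integer $m$ and for indeterminates $x,y$ (equivalently, for all elements $x,y$ of any commutative ring), \[ (x+y)^{s(m)} \;=\; \sum_{\substack{0\leq k\leq m \\ (k,\,m-k)\ \text{carry-free}}} x^{s(k)}\,y^{s(m-k)} . \]
   Context: For a non-negative integer $k$, $s(k)$ denotes the sum of the digits of the binary representation of $k$ (e.g. $s(3)=2$, $s(0)=0$). A pair $(a,b)$ of non-negative integers is called carry-free if the addition $a+b$ performed in binary involves no carries, i.e. no binary digit position has a $1$ in both $a$ and $b$. *)

From HB Require Import structures.
From mathcomp Require Import all_boot all_order all_algebra.
Set Implicit Arguments. Unset Strict Implicit. Unset Printing Implicit Defensive.

Definition bit (k i : nat) : bool := odd (k %/ 2 ^ i).

(* s(k): the sum of the binary digits of k.  All digits of weight 2^i with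
   i >= k are zero (since k < 2^k), so summing over i < k.+1 covers them all. *)
Definition s (k : nat) : nat := \sum_(i < k.+1) bit k i.

(* Positions
   i > a carry a 0 in a (a < 2^i), so checking positions i < a.+1 checks all
   binary positions; the boolean form makes it usable as a summation filter. *)
Definition carry_free (a b : nat) : bool := [forall i : 'I_a.+1, ~~ (bit a i && bit b i)].

(* Write m = b + 2q with b its last binary digit.  A carry-free splitting
   k + (m - k) of m is a carry-free splitting of q with the digit b given to
   either side (or to neither when b = 0), and s(b + 2q) = b + s(q); hence the
   sum for m is (x + y)^b times the sum for q, and strong induction on m
   reduces the identity to (x + y)^(s m) = (x + y)^b (x + y)^(s q). *)

From HB Require Import structures.
From mathcomp Require Import all_boot all_order all_algebra.
From mathcomp Require Import zify.
Import GRing.Theory.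

Lemma bit_eq0 k i : k < 2 ^ i -> bit k i = false.
Proof. by move=> lt_k; rewrite /bit divn_small. Qed.

Lemma bit_ge k i : k <= i -> bit k i = false.
Proof.
move=> le_ki; apply: bit_eq0.
by apply: leq_trans (ltn_expl k (ltnSn 1)) _; rewrite leq_pexp2l.
Qed.

Lemma s_widen k N : k < N -> s k = \sum_(i < N) bit k i.
Proof.
move=> lt_kN; rewrite /s (big_ord_widen N (fun i => (bit k i : nat))) //.
rewrite big_mkcond; apply: eq_bigr => i _; case: ifP => // /negbT.
by rewrite -leqNgt => le_ki; rewrite bit_ge // ltnW.
Qed.

Lemma s0 : s 0 = 0.
Proof. by rewrite /s big_ord1. Qed.

Lemma bit_double_add0 (c : bool) j : bit (c + j.*2) 0 = c.
Proof. by rewrite /bit expn0 divn1 oddD odd_double addbF; case: c. Qed.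

Lemma bit_double_addS (c : bool) j i : bit (c + j.*2) i.+1 = bit j i.
Proof. by rewrite /bit expnS divnMA divn2 half_bit_double. Qed.

Lemma s_double_add (c : bool) j : s (c + j.*2) = c + s j.
Proof.
rewrite (@s_widen _ (c + j.*2).+2) // big_ord_recl bit_double_add0.
rewrite (@s_widen j (c + j.*2).+1); last by case: c; lia.
by congr (_ + _); apply: eq_bigr => i _; rewrite /= bit_double_addS.
Qed.

Lemma carry_freeP a b :
  reflect (forall i, ~~ (bit a i && bit b i)) (carry_free a b).
Proof.
apply: (iffP forallP) => cf_ab i //.
have [lt_ia | le_ai] := ltnP i a.+1; first exact: (cf_ab (Ordinal lt_ia)).
by rewrite bit_ge // ltnW.
Qed.

Lemma carry_free00 : carry_free 0 0.
Proof. by apply/carry_freeP => i; rewrite bit_ge. Qed.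

Lemma carry_free_double_add (c : bool) j (d : bool) r :
  carry_free (c + j.*2) (d + r.*2) = ~~ (c && d) && carry_free j r.
Proof.
apply/carry_freeP/andP => [cf | [cf0 /carry_freeP cfS]].
  split; first by have := cf 0; rewrite !bit_double_add0.
  by apply/carry_freeP => i; have := cf i.+1; rewrite !bit_double_addS.
by case=> [|i]; rewrite ?bit_double_add0 ?bit_double_addS.
Qed.

Lemma sum_nat_double (V : nmodType) (f : nat -> V) N :
  (\sum_(0 <= k < N.*2) f k = \sum_(0 <= j < N) (f j.*2 + f j.*2.+1))%R.
Proof.
elim: N => [|N IH]; first by rewrite !big_geq.
by rewrite doubleS !big_nat_recr //= IH addrA.
Qed.

Local Open Scope ring_scope.

Section CarryFreeSum.
Variables (R : comPzRingType) (x y : R).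

Definition splitting_term (m k : nat) : R :=
  if (k <= m)%N && carry_free k (m - k) then x ^+ s k * y ^+ s (m - k) else 0.

Lemma carry_free_sum_widen m N : (m < N)%N ->
  \sum_(0 <= k < m.+1 | carry_free k (m - k)) x ^+ s k * y ^+ s (m - k) =
  \sum_(0 <= k < N) splitting_term m k.
Proof.
move=> lt_mN; rewrite big_mkcond /= [RHS](big_cat_nat (n := m.+1)) //=.
rewrite [X in _ = _ + X]big1_seq ?addr0.
  by apply: eq_big_nat => k /andP[_ le_km]; rewrite /splitting_term -ltnS le_km.
move=> k /andP[_]; rewrite mem_index_iota => /andP[lt_mk _].
by rewrite /splitting_term leqNgt lt_mk.
Qed.

Lemma splitting_term_double_add (b : bool) q (c : bool) j :
  splitting_term (b + q.*2) (c + j.*2) =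
  if (c <= b)%N then x ^+ c * y ^+ (b && ~~ c) * splitting_term q j else 0.
Proof.
rewrite /splitting_term; case: (leqP c b) => [le_cb | lt_bc].
  have [le_jq | lt_qj] := leqP j q.
    have sub : (b + q.*2 - (c + j.*2))%N = ((b && ~~ c) + (q - j).*2)%N.
      by move: le_cb; case: b; case: c => //= _; lia.
    have le : (c + j.*2 <= b + q.*2)%N by move: le_cb sub; case: b; case: c => //= _; lia.
    rewrite le sub carry_free_double_add !s_double_add /=.
    have -> : ~~ (c && (b && ~~ c)) by case: (c); case: (b).
    by case: (carry_free j (q - j)); rewrite ?mulr0 // !exprD mulrACA.
  rewrite mulr0 ifN //; apply/nandP; left; rewrite -ltnNge.
  by move: le_cb; case: (b); case: (c) => //= _; lia.
move: lt_bc; case: c; case: b => // _; case: ifP => // /andP[le sub_cf].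
(* an odd k below an even m leaves an odd m - k: both have last digit 1 *)
have sub : (q.*2 - (1 + j.*2))%N = (true + (q - j).-1.*2)%N by move: le => /=; lia.
by move: sub_cf; rewrite sub carry_free_double_add.
Qed.

Lemma splitting_term_pair (b : bool) q j :
  splitting_term (b + q.*2) j.*2 + splitting_term (b + q.*2) j.*2.+1 =
  (x + y) ^+ b * splitting_term q j.
Proof.
rewrite -[j.*2]/(false + j.*2)%N -[j.*2.+1]/(true + j.*2)%N.
rewrite !splitting_term_double_add /= andbT.
by case: b; rewrite ?expr0 ?expr1 ?mul1r ?mulr1 ?addr0 // mulrDl addrC.
Qed.

End CarryFreeSum.

Theorem theorem2 (R : comPzRingType) (m : nat) (x y : R) :
  (x + y) ^+ s m =
  \sum_(0 <= k < m.+1 | carry_free k (m - k)) x ^+ s k * y ^+ s (m - k).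
Proof.
elim/ltn_ind: m => m IH.
have [-> | m_gt0] := posnP m.
  by rewrite big_mkcond big_nat1 carry_free00 subnn s0 !expr0 mulr1.
have def_m := odd_double_half m.
have lt_half : (m./2 < m)%N by lia.
rewrite (@carry_free_sum_widen _ x y m m./2.+1.*2); last by lia.
rewrite sum_nat_double.
under eq_bigr => j _ do rewrite -{1 2}def_m splitting_term_pair.
rewrite -big_distrr /= -carry_free_sum_widen //.
by rewrite -IH // -exprD -s_double_add def_m.
Qed.
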